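(* Let $W\in\mathbb{R}^{n\times n}$ be symmetric with nonnegative entries, $L=\operatorname{diag}(W\mathbf{1})-W$, and let $L=V^T\Lambda V$ be a full spectral decomposition with $V$ orthogonal, $\Lambda=\operatorname{diag}(\lambda_1,\dots,\lambda_n)$, $\lambda_1\le\dots\le\lambda_n$, and first row $V_1=\frac{1}{\sqrt n}\mathbf{1}^T$. Define the virtual data $\tilde A=(\lambda_nI-\Lambda)^{1/2}V$ and its mean-removed version $\bar A=\tilde A(I-\frac1n\mathbf{1}\mathbf{1}^T)$. Let $r\ge 2$. Then the three problems $$\text{(i)}\ \min_{\tilde X}\operatorname{tr}\{XLX^T\}\ \text{s.t. } X=\begin{bmatrix}\tfrac{1}{\sqrt n}\mathbf{1}^T\\ \tilde X\end{bmatrix}\in\mathbb{R}^{r\times n},\ XX^T=I;$$ $$\text{(ii)}\ \min_{D,\tilde X}\|\tilde A-DX\|_F^2\ \text{s.t. } X=\begin{bmatrix}\tfrac{1}{\sqrt n}\mathbf{1}^T\\ \tilde X\end{bmatrix},\ XX^T=I;$$ $$\text{(iii)}\ \min_{D,\tilde X}\|\bar A-D\tilde X\|_F^2\ \text{s.t. } \tilde X\tilde X^T=I$$ (with $\tilde X\in\mathbb{R}^{(r-1)\times n}$) have equal solutions $\tilde X$, one of which is $V_{2:r}$ (rows $2$ through $r$ of $V$).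
   Context: $\mathbf{1}$ is the all-ones vector, $\operatorname{diag}(v)$ the diagonal matrix with diagonal $v$; $L$ is the graph Laplacian of the similarity matrix $W$. *)

From HB Require Import structures.
From mathcomp Require Import all_boot all_order all_algebra.
From mathcomp Require Import reals.
Set Implicit Arguments. Unset Strict Implicit. Unset Printing Implicit Defensive.
Import Order.TTheory GRing.Theory Num.Theory.
Local Open Scope ring_scope.

Section Defs.
Variable R : realType.

Definition ones n : 'cV[R]_n := const_mx 1.

Definition laplacian n (W : 'M[R]_n) : 'M[R]_n :=
  diag_mx (W *m ones n)^T - W.

Definition orthogonal_mx n (V : 'M[R]_n) : Prop := V^T *m V = 1%:M.

Definition frob2 m n (A : 'M[R]_(m, n)) : R := \sum_i \sum_j (A i j) ^+ 2.

Definition unit_ones_row n : 'rV[R]_n := const_mx (Num.sqrt (n%:R))^-1.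

Definition stackX k n (Xt : 'M[R]_(k, n)) : 'M[R]_(1 + k, n) :=
  col_mx (unit_ones_row n) Xt.

Definition feas12 k n (Xt : 'M[R]_(k, n)) : Prop :=
  stackX Xt *m (stackX Xt)^T = 1%:M.

Definition sol_i k n (L : 'M[R]_n) (Xt : 'M[R]_(k, n)) : Prop :=
  feas12 Xt /\
  forall Y : 'M[R]_(k, n), feas12 Y ->
    \tr (stackX Xt *m L *m (stackX Xt)^T) <= \tr (stackX Y *m L *m (stackX Y)^T).

Definition sol_ii k n (At : 'M[R]_n) (Xt : 'M[R]_(k, n)) : Prop :=
  feas12 Xt /\
  exists D : 'M[R]_(n, 1 + k),
    forall (D' : 'M[R]_(n, 1 + k)) (Y : 'M[R]_(k, n)), feas12 Y ->
      frob2 (At - D *m stackX Xt) <= frob2 (At - D' *m stackX Y).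

Definition sol_iii k n (Ab : 'M[R]_n) (Xt : 'M[R]_(k, n)) : Prop :=
  Xt *m Xt^T = 1%:M /\
  exists D : 'M[R]_(n, k),
    forall (D' : 'M[R]_(n, k)) (Y : 'M[R]_(k, n)), Y *m Y^T = 1%:M ->
      frob2 (Ab - D *m Xt) <= frob2 (Ab - D' *m Y).

(* virtual data At = (lambda_n I - Lambda)^{1/2} V, with lam indexed 0..n *)
Definition virtual_data n (lam : 'rV[R]_n.+1) (V : 'M[R]_n.+1) : 'M[R]_n.+1 :=
  diag_mx (\row_i Num.sqrt (lam 0 ord_max - lam 0 i)) *m V.

Definition mean_removed n (A : 'M[R]_n) : 'M[R]_n :=
  A *m (1%:M - (n%:R)^-1 *: (ones n *m (ones n)^T)).

(* rows 2..r of V (1-indexed), i.e. rows 1..r-1 (0-indexed) *)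
Definition rows_2_to_r n (r : nat) (V : 'M[R]_n.+1) : 'M[R]_(r.-1, n.+1) :=
  \matrix_(i < r.-1, j < n.+1) V (inord i.+1) j.

End Defs.

(* For [Y] with orthonormal rows, [||A - D Y||^2 = ||A||^2 - ||A Y^T||^2 + ||D - A Y^T||^2],
   so minimizing over the coefficient matrix [D] leaves the maximization of [||A Y^T||^2].
   In the eigenbasis, [Z := Y V^T] again has orthonormal rows, and every objective is a
   weighted sum [sum_j w_j c_j] of the column energies [c_j := sum_i Z_ij^2], which lie in
   [[0,1]] and add up to [r - 1]; the weights are [lambda_j] for (i), [lambda_n - lambda_j]
   for (ii) and [[j <> 1] (lambda_n - lambda_j)] for (iii).  On the feasible set of (i) the
   three objectives differ by constants, and a rearrangement argument shows that rows
   [2..r] of [V] are optimal for (iii) among all orthonormal [X~]; a competitor putting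
   energy [c_1] on the constant direction loses at least [(lambda_n - lambda_r) c_1]. *)

From HB Require Import structures.
From mathcomp Require Import all_boot all_order all_algebra.
From mathcomp Require Import reals.
From mathcomp Require Import ring lra zify.
Import Order.TTheory GRing.Theory Num.Theory.
Local Open Scope ring_scope.
Set Implicit Arguments. Unset Strict Implicit. Unset Printing Implicit Defensive.

Section Frobenius.
Variable R : realType.

Lemma frob2_mxtrace m n (B : 'M[R]_(m, n)) : frob2 B = \tr (B *m B^T).
Proof.
rewrite /frob2 /mxtrace; apply: eq_bigr => i _; rewrite !mxE.
by apply: eq_bigr => j _; rewrite !mxE expr2.
Qed.

Lemma frob2_ge0 m n (B : 'M[R]_(m, n)) : 0 <= frob2 B.
Proof. by apply: sumr_ge0 => i _; apply: sumr_ge0 => j _; apply: sqr_ge0. Qed.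

Lemma frob2_0 m n : frob2 (0 : 'M[R]_(m, n)) = 0.
Proof. by rewrite frob2_mxtrace mul0mx mxtrace0. Qed.

Lemma frob2_trmx m n (B : 'M[R]_(m, n)) : frob2 B^T = frob2 B.
Proof. by rewrite /frob2 exchange_big; apply: eq_bigr => j _; under eq_bigr do rewrite mxE. Qed.

Lemma frob2_opp m n (B : 'M[R]_(m, n)) : frob2 (- B) = frob2 B.
Proof. by rewrite !frob2_mxtrace linearN /= mulNmx mulmxN opprK. Qed.

Lemma frob2D_orth m n (B C : 'M[R]_(m, n)) :
  B *m C^T = 0 -> frob2 (B + C) = frob2 B + frob2 C.
Proof.
move=> hBC; have hCB : C *m B^T = 0 by rewrite -[C]trmxK -trmx_mul hBC trmx0.
by rewrite !frob2_mxtrace linearD /= mulmxDl !mulmxDr hBC hCB !addr0 add0r mxtraceD.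
Qed.

Lemma frob2_mulmx_orth m n k (M : 'M[R]_(m, k)) (Y : 'M[R]_(k, n)) :
  Y *m Y^T = 1%:M -> frob2 (M *m Y) = frob2 M.
Proof. by move=> hY; rewrite !frob2_mxtrace trmx_mul mulmxA -(mulmxA M) hY mulmx1. Qed.

(* Pythagoras: [A - (A Y^T) Y] is orthogonal to every [Q Y]. *)
Lemma frob2_sub_mulmx_orth m n k (A : 'M[R]_(m, n)) (D : 'M[R]_(m, k)) (Y : 'M[R]_(k, n)) :
  Y *m Y^T = 1%:M ->
  frob2 (A - D *m Y) = frob2 A - frob2 (A *m Y^T) + frob2 (D - A *m Y^T).
Proof.
move=> hY; set P := A *m Y^T; set B := A - P *m Y.
have hB Q : B *m (Q *m Y)^T = 0 :> 'M_m.
  by rewrite trmx_mul mulmxA mulmxBl -(mulmxA P) hY mulmx1 subrr mul0mx.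
have -> : A - D *m Y = B + (P - D) *m Y by rewrite mulmxBl addrA subrK.
have hA : frob2 A = frob2 B + frob2 P.
  by rewrite -(frob2_mulmx_orth P hY) -frob2D_orth // subrK.
by rewrite frob2D_orth // frob2_mulmx_orth // hA addrK -opprB frob2_opp.
Qed.

Lemma frob2_argmin_coefP (T : Type) m n k (A : 'M[R]_(m, n))
    (F : T -> 'M[R]_(k, n)) (P : T -> Prop) (x : T) :
  (forall y, P y -> F y *m (F y)^T = 1%:M) -> P x ->
  (exists D, forall D' y, P y -> frob2 (A - D *m F x) <= frob2 (A - D' *m F y)) <->
  (forall y, P y -> frob2 (A *m (F y)^T) <= frob2 (A *m (F x)^T)).
Proof.
move=> hF hx; split.
  move=> [D hD] y hy; have := hD (A *m (F y)^T) y hy.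
  rewrite (frob2_sub_mulmx_orth _ D) ?hF // (frob2_sub_mulmx_orth _ (A *m _)) ?hF //.
  rewrite subrr frob2_0.
  have := frob2_ge0 (D - A *m (F x)^T); lra.
move=> hmax; exists (A *m (F x)^T) => D' y hy.
rewrite (frob2_sub_mulmx_orth _ D') ?hF // (frob2_sub_mulmx_orth _ (A *m _)) ?hF //.
rewrite subrr frob2_0.
have := hmax y hy; have := frob2_ge0 (D' - A *m (F y)^T); lra.
Qed.

Definition col_energy k n (Z : 'M[R]_(k, n)) (j : 'I_n) : R := \sum_i Z i j ^+ 2.

Lemma col_energy_ge0 k n (Z : 'M[R]_(k, n)) j : 0 <= col_energy Z j.
Proof. by apply: sumr_ge0 => i _; apply: sqr_ge0. Qed.

Lemma col_energy_eq0 k n (Z : 'M[R]_(k, n)) j :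
  col_energy Z j = 0 <-> forall i, Z i j = 0.
Proof.
split=> [hZ i|hZ]; last by apply: big1 => i _; rewrite hZ expr0n.
have /psumr_eq0P : \sum_i Z i j ^+ 2 = 0 := hZ.
by move=> /(_ (fun i _ => sqr_ge0 (Z i j)) i isT) /eqP; rewrite sqrf_eq0 => /eqP.
Qed.

Lemma sum_col_energy k n (Z : 'M[R]_(k, n)) :
  Z *m Z^T = 1%:M -> \sum_j col_energy Z j = k%:R.
Proof.
move=> hZ; rewrite /col_energy exchange_big -[k%:R]mxtrace1 -hZ -frob2_mxtrace.
by apply: eq_bigr.
Qed.

(* Bessel: [w := Z^T (col j Z)] has squared norm [col_energy Z j] and [j]-th entry [col_energy Z j]. *)
Lemma col_energy_le1 k n (Z : 'M[R]_(k, n)) j :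
  Z *m Z^T = 1%:M -> col_energy Z j <= 1.
Proof.
move=> hZ; pose w := Z^T *m col j Z.
have w_norm : \sum_l w l 0 ^+ 2 = col_energy Z j.
  have -> : \sum_l w l 0 ^+ 2 = (w^T *m w) 0 0.
    by rewrite !mxE; apply: eq_bigr => l _; rewrite !mxE expr2.
  rewrite /w trmx_mul trmxK mulmxA -(mulmxA _ Z) hZ mulmx1 !mxE.
  by apply: eq_bigr => i _; rewrite !mxE expr2.
have w_j : w j 0 = col_energy Z j.
  by rewrite !mxE; apply: eq_bigr => i _; rewrite !mxE expr2.
have : col_energy Z j ^+ 2 <= col_energy Z j.
  rewrite -{2}w_norm (bigD1 j) //= w_j lerDl.
  by apply: sumr_ge0 => l _; apply: sqr_ge0.
have := col_energy_ge0 Z j; nra.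
Qed.

Lemma mxtrace_mul_diag k n (Z : 'M[R]_(k, n)) (d : 'rV[R]_n) :
  \tr (Z *m diag_mx d *m Z^T) = \sum_j d 0 j * col_energy Z j.
Proof.
rewrite /mxtrace /col_energy; under eq_bigr => i _ do rewrite !mxE.
rewrite exchange_big; apply: eq_bigr => j _; rewrite mulr_sumr.
by apply: eq_bigr => i _; rewrite mul_mx_diag !mxE; ring.
Qed.

Lemma frob2_mul_diag k n (Z : 'M[R]_(k, n)) (t : 'rV[R]_n) :
  frob2 (Z *m diag_mx t) = \sum_j t 0 j ^+ 2 * col_energy Z j.
Proof.
rewrite /frob2 /col_energy exchange_big; apply: eq_bigr => j _; rewrite mulr_sumr.
by apply: eq_bigr => i _; rewrite mul_mx_diag mxE exprMn mulrC.
Qed.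

End Frobenius.

Arguments frob2_argmin_coefP {R T m n k} A F P {x}.

Section Rearrangement.
Variables (R : realType) (I : finType).

Lemma weighted_sum_le_top (w c : I -> R) (b : pred I) (t : R) (k : nat) :
  (forall j, 0 <= c j <= 1) -> \sum_j c j = k%:R -> \sum_j (b j)%:R = k%:R :> R ->
  (forall j, b j -> t <= w j) -> (forall j, ~~ b j -> w j <= t) ->
  forall j0, ~~ b j0 ->
  \sum_j w j * c j + (t - w j0) * c j0 <= \sum_j w j * (b j)%:R.
Proof.
move=> hc hsc hsb hin hout j0 hj0.
have gap : \sum_j w j * (b j)%:R - \sum_j w j * c j =
    \sum_j (w j - t) * ((b j)%:R - c j).
  have -> : \sum_j (w j - t) * ((b j)%:R - c j) =
      \sum_j (w j * (b j)%:R - w j * c j) - t * (\sum_j (b j)%:R - \sum_j c j).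
    by rewrite -sumrB mulr_sumr -sumrB; apply: eq_bigr => j _; ring.
  by rewrite hsb hsc subrr mulr0 subr0 sumrB.
have term_ge0 j : 0 <= (w j - t) * ((b j)%:R - c j).
  have /andP[c0 c1] := hc j; case: (boolP (b j)) => hb.
    by apply: mulr_ge0; rewrite subr_ge0 // hin.
  by apply: mulr_le0; rewrite ?subr_le0 ?hout // sub0r oppr_le0.
have : (t - w j0) * c j0 <= \sum_j (w j - t) * ((b j)%:R - c j).
  rewrite (bigD1 j0) //= (negbTE hj0) -[X in X <= _]addr0 lerD //.
    by rewrite /= sub0r mulrN -mulNr opprB.
  by apply: sumr_ge0 => j _; apply: term_ge0.
rewrite -gap; lra.
Qed.

End Rearrangement.

Section UnitOnesRow.
Variables (R : realType) (N : nat).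
Local Notation n := N.+1.
Local Notation u := (@unit_ones_row R n).

Lemma sqrt_natr_neq0 : Num.sqrt (n%:R : R) != 0.
Proof. by rewrite sqrtr_eq0 -ltNge ltr0n. Qed.

Lemma unit_ones_row_unit : u *m u^T = 1%:M.
Proof.
apply/matrixP => i j; rewrite !ord1 !mxE eqxx /=.
under eq_bigr => l _ do rewrite !mxE.
rewrite sumr_const card_ord -invfM -expr2 sqr_sqrtr ?ler0n //.
by rewrite -[_ *+ _]mulr_natl mulfV // pnatr_eq0.
Qed.

Lemma feas12P k (Y : 'M[R]_(k, n)) :
  feas12 Y <-> Y *m Y^T = 1%:M /\ Y *m u^T = 0.
Proof.
rewrite /feas12 /stackX tr_col_mx mul_col_row (scalar_mx_block 1 k).
split=> [/eq_block_mx [_ _ -> ->] // | [hY hYu]].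
have huY : u *m Y^T = 0 by rewrite -(trmxK u) -trmx_mul hYu trmx0.
by rewrite unit_ones_row_unit hY hYu huY.
Qed.

Lemma mxtrace_stackX k (L : 'M[R]_n) (Y : 'M[R]_(k, n)) :
  \tr (stackX Y *m L *m (stackX Y)^T) = \tr (u *m L *m u^T) + \tr (Y *m L *m Y^T).
Proof. by rewrite /stackX tr_col_mx (mul_col_mx u Y L) mul_col_row mxtrace_block. Qed.

Lemma mulmx_ones_eq0 k (Y : 'M[R]_(k, n)) : Y *m ones R n = 0 <-> Y *m u^T = 0.
Proof.
have -> : ones R n = Num.sqrt (n%:R) *: u^T.
  by apply/matrixP => i j; rewrite !mxE mulfV // sqrt_natr_neq0.
rewrite -scalemxAr; split => [/eqP|->]; last by rewrite scaler0.
by rewrite scaler_eq0 (negbTE sqrt_natr_neq0) /= => /eqP.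
Qed.

End UnitOnesRow.

Section Spectral.
Variables (R : realType) (N : nat).
Local Notation n := N.+1.
Variables (V : 'M[R]_n) (lam : 'rV[R]_n).
Hypothesis hVV : orthogonal_mx V.
Hypothesis hV1 : row ord0 V = @unit_ones_row R n.
Hypothesis hlam : forall i j : 'I_n, (i <= j)%N -> lam 0 i <= lam 0 j.
Local Notation u := (@unit_ones_row R n).
Local Notation L := (V^T *m diag_mx lam *m V).
Local Notation At := (virtual_data lam V).
Local Notation Ab := (mean_removed (virtual_data lam V)).

Definition spectral_gap (j : 'I_n) : R := lam 0 ord_max - lam 0 j.

Lemma spectral_gap_ge0 j : 0 <= spectral_gap j.
Proof. by rewrite subr_ge0; apply: hlam; rewrite -ltnS ltn_ord. Qed.

Lemma orthogonal_mx_mulmxtr : V *m V^T = 1%:M.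
Proof. exact: mulmx1C. Qed.

Lemma orth_rows_mulmxtrV k (Y : 'M[R]_(k, n)) :
  Y *m Y^T = 1%:M -> (Y *m V^T) *m (Y *m V^T)^T = 1%:M.
Proof. by move=> hY; rewrite trmx_mul trmxK mulmxA -(mulmxA Y) hVV mulmx1. Qed.

Lemma mxtrace_spectral k (d : 'rV[R]_n) (Y : 'M[R]_(k, n)) :
  \tr (Y *m (V^T *m diag_mx d *m V) *m Y^T) = \sum_j d 0 j * col_energy (Y *m V^T) j.
Proof.
rewrite -mxtrace_mul_diag; congr (mxtrace _).
by rewrite trmx_mul trmxK !mulmxA.
Qed.

Lemma frob2_spectral k (t : 'rV[R]_n) (Y : 'M[R]_(k, n)) :
  frob2 (diag_mx t *m V *m Y^T) = \sum_j t 0 j ^+ 2 * col_energy (Y *m V^T) j.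
Proof.
rewrite -frob2_trmx -frob2_mul_diag; congr (frob2 _).
by rewrite !trmx_mul tr_diag_mx trmxK mulmxA.
Qed.

Lemma mulmxtrV_col0 k (Y : 'M[R]_(k, n)) i : (Y *m V^T) i ord0 = (Y *m u^T) i ord0.
Proof. by rewrite -hV1 !mxE; apply: eq_bigr => l _; rewrite !mxE. Qed.

Lemma col_energy0_eq0 k (Y : 'M[R]_(k, n)) :
  col_energy (Y *m V^T) ord0 = 0 <-> Y *m u^T = 0.
Proof.
rewrite col_energy_eq0; split=> [hY|hY i]; last by rewrite mulmxtrV_col0 hY mxE.
by apply/matrixP => i j; rewrite ord1 -mulmxtrV_col0 hY mxE.
Qed.

Lemma V_unit_ones_row i : (V *m u^T) i ord0 = (i == ord0)%:R.
Proof.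
have := congr1 (fun M : 'M[R]_n => M i ord0) orthogonal_mx_mulmxtr.
rewrite [RHS]mxE => <-.
by rewrite -hV1 !mxE; apply: eq_bigr => l _; rewrite !mxE.
Qed.

(* Removing the mean kills the first (constant) eigendirection of [At]. *)
Lemma mean_removed_virtual_data :
  Ab = diag_mx (\row_i ((i != ord0)%:R * Num.sqrt (spectral_gap i))) *m V.
Proof.
have hJ : (n%:R : R)^-1 *: (ones R n *m (ones R n)^T) = u^T *m u.
  apply/matrixP => i j; rewrite !mxE !big_ord1 !mxE mulr1 -invfM -expr2.
  by rewrite mulr1 sqr_sqrtr ?ler0n.
have hVJ : V *m u^T *m u = \matrix_(i, j) ((i == ord0)%:R * V ord0 j).
  by apply/matrixP => i j; rewrite [LHS]mxE big_ord1 V_unit_ones_row -hV1 !mxE.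
rewrite /mean_removed /virtual_data hJ mulmxBr mulmx1 -!mulmxA (mulmxA V) hVJ.
rewrite -mulmxBr !mul_diag_mx; apply/matrixP => i j; rewrite !mxE.
by have [->|hi] := eqVneq i ord0; rewrite /= ?mul1r ?mul0r ?subrr ?subr0 ?mulr0.
Qed.

Definition laplacian_cost k (Y : 'M[R]_(k, n)) : R := \tr (stackX Y *m L *m (stackX Y)^T).

Definition centered_energy k (Y : 'M[R]_(k, n)) : R := frob2 (Ab *m Y^T).

Lemma frob2_virtual_data k (Y : 'M[R]_(k, n)) : feas12 Y ->
  frob2 (At *m (stackX Y)^T) = lam 0 ord_max * (1 + k)%:R - laplacian_cost Y.
Proof.
move=> hY; rewrite frob2_spectral /laplacian_cost mxtrace_spectral.
rewrite -(sum_col_energy (orth_rows_mulmxtrV hY)) mulr_sumr -sumrB.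
by apply: eq_bigr => j _; rewrite mxE sqr_sqrtr ?spectral_gap_ge0 // /spectral_gap; ring.
Qed.

Lemma centered_energy_spectral k (Y : 'M[R]_(k, n)) : centered_energy Y =
  \sum_j (j != ord0)%:R * spectral_gap j * col_energy (Y *m V^T) j.
Proof.
rewrite /centered_energy mean_removed_virtual_data frob2_spectral.
apply: eq_bigr => j _; rewrite mxE exprMn sqr_sqrtr ?spectral_gap_ge0 //.
by case: (j != ord0); rewrite ?expr1n ?expr0n.
Qed.

Lemma laplacian_cost_centered k (Y : 'M[R]_(k, n)) : feas12 Y ->
  laplacian_cost Y = \tr (u *m L *m u^T) + lam 0 ord_max * k%:R - centered_energy Y.
Proof.
move=> /feas12P [hY hYu].
rewrite /laplacian_cost mxtrace_stackX [\tr (Y *m _ *m _)]mxtrace_spectral.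
rewrite centered_energy_spectral.
have hc0 : col_energy (Y *m V^T) ord0 = 0 by apply/col_energy0_eq0.
rewrite -(sum_col_energy (orth_rows_mulmxtrV hY)) mulr_sumr -addrA -sumrB.
congr (_ + _); apply: eq_bigr => j _.
by have [->|_] := eqVneq j ord0; rewrite ?hc0 /spectral_gap /=; ring.
Qed.

Lemma sol_i_iiP k (X : 'M[R]_(k, n)) : sol_i L X <-> sol_ii At X.
Proof.
rewrite /sol_i /sol_ii.
have hmin := frob2_argmin_coefP At (@stackX R k n) (@feas12 R k n) (fun=> id).
split=> -[hX hopt]; split=> //.
  by apply/hmin => // Y hY; rewrite !frob2_virtual_data // lerD2l lerN2 hopt.
by move=> Y hY; have := proj1 (hmin _ hX) hopt Y hY; rewrite !frob2_virtual_data // lerD2l lerN2.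
Qed.

Lemma sol_iiiP k (X : 'M[R]_(k, n)) : sol_iii Ab X <->
  X *m X^T = 1%:M /\
  (forall Y : 'M[R]_(k, n), Y *m Y^T = 1%:M -> centered_energy Y <= centered_energy X).
Proof.
have hmax := frob2_argmin_coefP Ab id (fun Y : 'M_(k, n) => Y *m Y^T = 1%:M) (fun=> id).
by rewrite /sol_iii; split=> -[hX hopt]; split=> //; apply/hmax.
Qed.

Lemma sol_iP k (X : 'M[R]_(k, n)) : sol_i L X <->
  feas12 X /\ (forall Y : 'M[R]_(k, n), feas12 Y -> centered_energy Y <= centered_energy X).
Proof.
rewrite /sol_i; split=> -[hX hopt]; split=> // Y hY; move: (hopt Y hY);
  by rewrite -!/(laplacian_cost _) !laplacian_cost_centered // lerD2l lerN2.
Qed.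

Section Rows.
Variable r : nat.
Hypotheses (hr2 : (2 <= r)%N) (hrn : (r <= n)%N).
Local Notation k := r.-1.
Local Notation Y0 := (rows_2_to_r r V).

Lemma inord_succ_eq (i : 'I_k) (j : 'I_n) : (inord i.+1 == j :> 'I_n) = (i.+1 == j)%N.
Proof. by rewrite -val_eqE /= inordK //; have := ltn_ord i; lia. Qed.

Lemma rows_2_to_r_mulmxtrV i j : (Y0 *m V^T) i j = (i.+1 == j)%N%:R.
Proof.
have := congr1 (fun M : 'M[R]_n => M (inord i.+1) j) orthogonal_mx_mulmxtr.
rewrite [RHS]mxE inord_succ_eq => <-.
by rewrite !mxE; apply: eq_bigr => l _; rewrite !mxE.
Qed.

Lemma rows_2_to_r_orth : Y0 *m Y0^T = 1%:M.
Proof.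
apply/matrixP => i i'.
have := congr1 (fun M : 'M[R]_n => M (inord i.+1) (inord i'.+1)) orthogonal_mx_mulmxtr.
rewrite [RHS]mxE inord_succ_eq inordK ?eqSS; last by have := ltn_ord i'; lia.
by move=> h; rewrite [RHS]mxE -h !mxE; apply: eq_bigr => l _; rewrite !mxE.
Qed.

Lemma col_energy_rows_2_to_r j :
  col_energy (Y0 *m V^T) j = ((0 < j) && (j <= k))%N%:R.
Proof.
rewrite /col_energy; under eq_bigr do rewrite rows_2_to_r_mulmxtrV.
have [hj|hj] := boolP ((0 < j) && (j <= k))%N; last first.
  apply: big1 => i _; have -> : (i.+1 == j)%N = false.
    by apply/negbTE; apply: contra hj => /eqP <-; have := ltn_ord i; lia.
  by rewrite expr0n.
have hj1 : (j.-1 < k)%N by lia.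
rewrite (bigD1 (Ordinal hj1)) //= big1 ?addr0 => [|i hi].
  have -> : (j.-1.+1 == j)%N by apply/eqP; lia.
  by rewrite expr1n.
have -> : (i.+1 == j)%N = false.
  by apply/negbTE; apply: contra hi => /eqP hi; apply/eqP/val_inj => /=; lia.
by rewrite expr0n.
Qed.

Lemma feas12_rows_2_to_r : feas12 Y0.
Proof.
apply/feas12P; split; first exact: rows_2_to_r_orth.
by apply/col_energy0_eq0; rewrite col_energy_rows_2_to_r.
Qed.

(* Ky Fan: [Y0] puts full energy on the [k] largest weights; a competitor additionally
   loses its energy on the constant direction, weighted by [lambda_n - lambda_r]. *)
Lemma centered_energy_le_rows (Y : 'M[R]_(k, n)) : Y *m Y^T = 1%:M ->
  centered_energy Y + spectral_gap (inord k) * col_energy (Y *m V^T) ord0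
    <= centered_energy Y0.
Proof.
move=> hY; have hkn : (k < n)%N by lia.
have hZ := orth_rows_mulmxtrV hY.
rewrite !centered_energy_spectral.
under [X in _ <= X]eq_bigr do rewrite col_energy_rows_2_to_r.
have := weighted_sum_le_top (w := fun j => (j != ord0)%:R * spectral_gap j)
  (c := col_energy (Y *m V^T)) (b := fun j : 'I_n => ((0 < j) && (j <= k))%N)
  (t := spectral_gap (inord k)) (k := k).
move=> /(_ _ _ _ _ _ ord0 isT) /=; rewrite mul0r subr0; apply.
- by move=> j; rewrite col_energy_ge0 col_energy_le1.
- exact: sum_col_energy.
- rewrite -(sum_col_energy (orth_rows_mulmxtrV rows_2_to_r_orth)).
  by apply: eq_bigr => j _; rewrite col_energy_rows_2_to_r.
- move=> j /andP [hj0 hjk]; have -> : j != ord0 by rewrite -val_eqE /=; lia.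
  by rewrite mul1r lerD2l lerN2; apply: hlam; rewrite inordK.
- move=> j; rewrite negb_and -!ltnNge.
  have [->|hj0] := eqVneq j ord0; first by rewrite mul0r spectral_gap_ge0.
  rewrite mul1r lerD2l lerN2 => /orP hj; apply: hlam; rewrite inordK //.
  by move: hj0 hj; rewrite -val_eqE /=; lia.
Qed.

Lemma sol_iii_rows_2_to_r : sol_iii Ab Y0.
Proof.
apply/sol_iiiP; split=> [|Y hY]; first exact: rows_2_to_r_orth.
have := centered_energy_le_rows hY.
have := mulr_ge0 (spectral_gap_ge0 (inord k)) (col_energy_ge0 (Y *m V^T) ord0).
lra.
Qed.

Lemma sol_i_iiiP (X : 'M[R]_(k, n)) :
  sol_i L X <-> sol_iii Ab X /\ X *m ones R n = 0.
Proof.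
rewrite sol_iP mulmx_ones_eq0; split.
  move=> [/[dup] hX /feas12P [hXX hXu] hopt]; split=> //; apply/sol_iiiP.
  split=> // Y hY; have /sol_iiiP [_ hY0] := sol_iii_rows_2_to_r.
  exact: le_trans (hY0 Y hY) (hopt _ feas12_rows_2_to_r).
move=> [/sol_iiiP [hXX hopt] hXu]; split; first exact/feas12P.
by move=> Y /feas12P [hY _]; apply: hopt.
Qed.

Lemma sol_i_rows_2_to_r : sol_i L Y0.
Proof.
apply/sol_i_iiiP; split; first exact: sol_iii_rows_2_to_r.
by apply/mulmx_ones_eq0; case/feas12P: feas12_rows_2_to_r.
Qed.

(* The gap [lambda_r < lambda_n] forces a solution of (iii) to put no energy on the constant direction. *)
Lemma sol_i_iiiP_gap : lam 0 (inord k) < lam 0 ord_max ->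
  forall X : 'M[R]_(k, n), sol_i L X <-> sol_iii Ab X.
Proof.
move=> hgap X; split=> [/sol_i_iiiP [] //|hX]; apply/sol_i_iiiP; split=> //.
apply/mulmx_ones_eq0/col_energy0_eq0; have /sol_iiiP [hXX hopt] := hX.
have := centered_energy_le_rows hXX.
have := hopt _ rows_2_to_r_orth.
have := col_energy_ge0 (X *m V^T) ord0.
have : 0 < spectral_gap (inord k) by rewrite subr_gt0.
nra.
Qed.

End Rows.

End Spectral.

Unset Implicit Arguments.

Theorem proposition3 (R : realType) (N r : nat)
    (W : 'M[R]_N.+1) (V : 'M[R]_N.+1) (lam : 'rV[R]_N.+1)
    (hWsym : W^T = W) (hWnn : forall i j, 0 <= W i j)
    (hVorth : orthogonal_mx V)
    (hlam : forall i j : 'I_N.+1, (i <= j)%N -> lam 0 i <= lam 0 j)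
    (hdec : laplacian W = V^T *m diag_mx lam *m V)
    (hV1 : row ord0 V = @unit_ones_row R N.+1)
    (hr2 : (2 <= r)%N) (hrn : (r <= N.+1)%N) :
  let L := laplacian W in
  let At := virtual_data lam V in
  let Ab := mean_removed At in
  (forall Xt : 'M[R]_(r.-1, N.+1), sol_i L Xt <-> sol_ii At Xt) /\
  (forall Xt : 'M[R]_(r.-1, N.+1),
      sol_i L Xt <-> (sol_iii Ab Xt /\ Xt *m @ones R N.+1 = 0)) /\
  (lam 0 (inord r.-1) < lam 0 ord_max ->
      forall Xt : 'M[R]_(r.-1, N.+1), sol_i L Xt <-> sol_iii Ab Xt) /\
  sol_i L (rows_2_to_r r V) /\ sol_ii At (rows_2_to_r r V) /\
  sol_iii Ab (rows_2_to_r r V).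
Proof.
move=> L At Ab; rewrite {}/L {}/Ab {}/At hdec.
split; first by move=> X; apply: sol_i_iiP.
split; first by move=> X; apply: sol_i_iiiP.
split; first exact: sol_i_iiiP_gap.
split; first exact: sol_i_rows_2_to_r.
by split; [apply/sol_i_iiP/sol_i_rows_2_to_r | apply: sol_iii_rows_2_to_r].
Qed.
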